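(* Suppose that $d(p_{r+1}^2) \le 2p_r$ for every $r \ge 1$. Then Legendre's conjecture holds: for every natural number $n \ge 1$ there is a prime strictly between $n^2$ and $(n+1)^2$.
   Context: $p_k$ denotes the $k$-th prime ($p_1=2$, $p_2=3$, \dots). For $r \ge 1$, $d(p_{r+1}^2)$ denotes the maximum of $q'-q$ over all pairs of consecutive primes $q<q'$ with $p_{r+1} \le q < q' \le p_{r+1}^2$ (equivalently, the maximum gap between consecutive integers coprime to $p_r\# = \prod_{i\le r} p_i$ lying in the interval $[p_{r+1}, p_{r+1}^2]$). *)

From mathcomp Require Import all_boot.
Set Implicit Arguments. Unset Strict Implicit. Unset Printing Implicit Defensive.

(* [kth_prime k p] : p is the k-th prime p_k (1-indexed: p_1 = 2),
   i.e. p is prime and exactly k-1 primes are smaller than p. *)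
Definition kth_prime (k p : nat) : Prop :=
  prime p /\ count prime (iota 0 p) = k.-1.

Definition consec_primes (q q' : nat) : bool :=
  [&& prime q, prime q', q < q' & ~~ has prime (iota q.+1 (q' - q.+1))].

(* maxgap L U = max of q' - q over consecutive primes q < q' with L <= q < q' <= U
   (0 if there is no such pair). *)
Definition maxgap (L U : nat) : nat :=
  \max_(q < U.+1) \max_(q' < U.+1 | (L <= q) && consec_primes q q') (q' - q).

(* d(p_{r+1}^2) as in the paper, where p = p_{r+1}. *)
Definition d_sq (p : nat) : nat := maxgap p (p ^ 2).

From mathcomp Require Import all_boot zify.
Set Implicit Arguments. Unset Strict Implicit. Unset Printing Implicit Defensive.

(* Let q < q' be the consecutive primes around n^2 and a < b the consecutive
   primes with a^2 < q' <= b^2.  A weak Bertrand postulate (a prime in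
   (q, q^2], by Erdős's central binomial argument) gives q' <= q^2, hence
   b <= q, so q' - q is one of the gaps measured by d(b^2) <= 2a.  Since n^2 is
   not prime, a^2 < q' <= q + 2a <= n^2 - 1 + 2a forces a <= n, whence
   q' < (n + 1)^2. *)

Lemma logn_fact_ext p n K : prime p -> n <= K ->
  logn p n`! = \sum_(1 <= k < K.+1) n %/ p ^ k.
Proof.
move=> pp nK; rewrite logn_fact // [RHS](big_cat_nat _ (n := n.+1)) //=.
rewrite [X in _ = _ + X]big1_seq ?addn0 // => k /andP[_].
rewrite mem_iota => /andP[nk _]; apply: divn_small.
exact: leq_trans nk (ltnW (ltn_expl _ (prime_gt1 pp))).
Qed.

Lemma double_divn_bounds m d : 0 < d -> (m %/ d).*2 <= m.*2 %/ d <= (m %/ d).*2 + 1.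
Proof.
move=> d0; have e := divn_eq m d; have r := ltn_pmod m d0.
apply/andP; split; first by rewrite leq_divRL //; lia.
by rewrite -ltnS ltn_divLR //; lia.
Qed.

Lemma logn_central_binom p m : prime p ->
  logn p 'C(m.*2, m) = \sum_(1 <= k < (m.*2).+1) (m.*2 %/ p ^ k - (m %/ p ^ k).*2).
Proof.
move=> pp; have m2 : m <= m.*2 by rewrite -addnn leq_addr.
have := congr1 (logn p) (bin_fact m2).
have -> : m.*2 - m = m by rewrite -addnn addnK.
rewrite lognM ?bin_gt0 ?muln_gt0 ?fact_gt0 // lognM ?fact_gt0 //.
rewrite (logn_fact_ext pp m2) (logn_fact_ext pp (leqnn _)).
suff -> : \sum_(1 <= k < (m.*2).+1) m.*2 %/ p ^ k =
    \sum_(1 <= k < (m.*2).+1) (m.*2 %/ p ^ k - (m %/ p ^ k).*2) +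
    (\sum_(1 <= k < (m.*2).+1) m %/ p ^ k).*2 by lia.
rewrite (big_morph double doubleD (erefl 0.*2)) -big_split /=.
apply: eq_bigr => k _; rewrite subnK //.
have pk : 0 < p ^ k by rewrite expn_gt0 prime_gt0.
by case/andP: (double_divn_bounds m pk).
Qed.

Lemma logn_central_binom_le p m : prime p -> logn p 'C(m.*2, m) <= trunc_log p m.*2.
Proof.
move=> pp; have p1 := prime_gt1 pp; set t := trunc_log p m.*2.
have tm : t <= m.*2.
  have [m_eq0 | m_gt0] := posnP m; first by rewrite /t m_eq0 trunc_log0.
  by apply: ltnW (leq_trans (ltn_expl t p1) (trunc_logP p1 _)); rewrite double_gt0.
(* Each summand is 0 or 1, and it vanishes as soon as p ^ k > m.*2. *)
rewrite logn_central_binom // (big_cat_nat _ (n := t.+1)) //=.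
rewrite [X in _ + X]big1_seq ?addn0 => [|k /andP[_]].
  apply: leq_trans (_ : \sum_(1 <= k < t.+1) 1 <= _); last first.
    by rewrite sum_nat_const_nat subn1 muln1.
  apply: leq_sum => k _; have pk : 0 < p ^ k by rewrite expn_gt0 prime_gt0.
  by case/andP: (double_divn_bounds m pk) => _; lia.
rewrite mem_iota => /andP[tk _].
by rewrite divn_small // (leq_trans (trunc_log_ltn _ p1)) ?leq_exp2l.
Qed.

Lemma central_binom_pfactor_le p m : prime p -> 0 < m -> p ^ logn p 'C(m.*2, m) <= m.*2.
Proof.
move=> pp m0; apply: leq_trans (trunc_logP (prime_gt1 pp) _); last by rewrite double_gt0.
by rewrite leq_exp2l ?prime_gt1 ?logn_central_binom_le.
Qed.

Lemma primes_central_binom_le p m : p \in primes 'C(m.*2, m) -> p <= m.*2.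
Proof.
move=> pC; have pp : prime p by move: pC; rewrite mem_primes => /andP[].
rewrite leqNgt; apply/negP => m2p; move: pC; rewrite -logn_gt0 lt0n; apply/negP.
rewrite -leqn0 (leq_trans (logn_central_binom_le m pp)) // leqn0 trunc_log_eq0.
by apply/orP; right; lia.
Qed.

Lemma leq_pow_of_prime_powers n N q : 0 < n -> 0 < N ->
  (forall p, p \in primes n -> p ^ logn p n <= N /\ p <= q) -> n <= N ^ q.
Proof.
move=> n0 N0 hp; rewrite {1}(prod_prime_decomp n0) prime_decompE big_map /=.
apply: leq_trans (_ : \prod_(p <- primes n) N <= _).
  by rewrite big_seq_cond [X in _ <= X]big_seq_cond; apply: leq_prod => p /andP[/hp[]].
rewrite big_const_seq count_predT iter_muln_1 leq_pexp2l // -(size_iota 1 q).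
apply: uniq_leq_size (primes_uniq n) _ => p pn; have [_ pq] := hp p pn.
have pp : prime p by move: pn; rewrite mem_primes => /andP[].
by rewrite mem_iota prime_gt0 //=; lia.
Qed.

Lemma central_binom_le_pow m q : 0 < m ->
  (forall p, prime p -> p <= m.*2 -> p <= q) -> 'C(m.*2, m) <= m.*2 ^ q.
Proof.
move=> m0 hq; apply: leq_pow_of_prime_powers; rewrite ?bin_gt0 ?double_gt0 //; first lia.
move=> p pC; have pp : prime p by move: pC; rewrite mem_primes => /andP[].
by split; [exact: central_binom_pfactor_le | exact: hq (primes_central_binom_le pC)].
Qed.

Lemma fact_double_ge m : 4 ^ m * (m`! * m`!) <= (m.*2).+1 * (m.*2)`!.
Proof.
elim: m => // m IH; rewrite doubleS !factS expnS.
have := leq_mul IH (leqnn (4 * (m.+1 * m.+1))); nia.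
Qed.

Lemma central_binom_ge m : 4 ^ m <= (m.*2).+1 * 'C(m.*2, m).
Proof.
have fpos : 0 < m`! * m`! by rewrite muln_gt0 fact_gt0.
have := @bin_fact m.*2 m; rewrite -addnn addnK addnn => /(_ ltac:(lia)).
by rewrite -(leq_pmul2r fpos) -mulnA => ->; apply: fact_double_ge.
Qed.

Lemma cube_le_pow2 q : 10 <= q -> q ^ 3 <= 2 ^ q.
Proof.
elim: q => // q IH; rewrite leq_eqVlt => /predU1P[<- // | q10].
have : q.+1 ^ 3 <= 2 * q ^ 3 by rewrite !expnS expn0; nia.
by rewrite [2 ^ _]expnS; have := IH q10; lia.
Qed.

Lemma pow_lt_pow2 q N : 11 <= q -> q ^ 2 <= N.+1 -> N <= q ^ 2 -> N.+1 * N ^ q < 2 ^ N.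
Proof.
move=> q11 qN Nq.
have small : N.+1 * N ^ q <= q ^ (3 + 2 * q).
  rewrite expnD expnM; apply: leq_mul; last by rewrite leq_exp2r; lia.
  by apply: leq_trans (_ : q ^ 2 + 1 <= _); [lia | rewrite !expnS expn0; nia].
apply: leq_ltn_trans small _; rewrite -(ltn_exp2r _ _ (isT : 0 < 3)) -!expnM.
rewrite mulnC expnM; apply: leq_ltn_trans (_ : (2 ^ q) ^ (3 + 2 * q) < _).
  by rewrite leq_exp2r ?cube_le_pow2 //; lia.
by rewrite -expnM ltn_exp2l //; nia.
Qed.

Lemma exists_prime_between_sq q : 1 < q -> exists p, [/\ prime p, q < p & p <= q ^ 2].
Proof.
move=> q1; have [/hasP[p] | no_prime] := boolP (has prime (iota q.+1 (q ^ 2 - q))).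
  by rewrite mem_iota => /andP[qp pq2] pp; exists p; split => //; lia.
exfalso; have [q_small | q11] := ltnP q 11.
  by move: q1 q_small no_prime; do 11?case: q => [|q] //.
set m := (q ^ 2)./2.
have [qm mq] : q ^ 2 <= (m.*2).+1 /\ m.*2 <= q ^ 2.
  by have := odd_double_half (q ^ 2); rewrite -/m; case: odd => /= h; lia.
have m0 : 0 < m.
  have : 11 * 11 <= q ^ 2 by rewrite expnS expn1; nia.
  lia.
have primes_le_q p : prime p -> p <= m.*2 -> p <= q.
  move=> pp pm; rewrite leqNgt; apply/negP => qp; move/hasPn: no_prime => /(_ p).
  by rewrite pp mem_iota => /(_ ltac:(lia)).
have := leq_trans (central_binom_ge m) (leq_mul (leqnn _) (central_binom_le_pow m0 primes_le_q)).
by rewrite (_ : 4 = 2 ^ 2) // -expnM mul2n leqNgt pow_lt_pow2.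
Qed.

Lemma consec_primesP q q' : reflect
  [/\ prime q, prime q', q < q' & forall k, q < k < q' -> ~~ prime k]
  (consec_primes q q').
Proof.
apply: (iffP and4P) => -[pq pq' qq' gap]; split => //.
  by move=> k qk; apply: (hasPn gap); rewrite mem_iota; lia.
by apply/hasPn => k; rewrite mem_iota => kq; apply: gap; lia.
Qed.

Lemma consec_primes_leq a b p : consec_primes a b -> prime p -> a < p -> b <= p.
Proof.
case/consec_primesP => _ _ _ gap pp ap; rewrite leqNgt; apply/negP => pb.
by move: (gap p); rewrite ap pb pp => /(_ isT).
Qed.

Lemma consec_primes_le_sq q q' : consec_primes q q' -> q' <= q ^ 2.
Proof.
move=> qq'; have [pq _ _ _] := consec_primesP _ _ qq'.
have [p [pp qp pq2]] := exists_prime_between_sq (prime_gt1 pq).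
exact: leq_trans (consec_primes_leq qq' pp qp) pq2.
Qed.

Lemma consec_primes_around x : 1 < x -> exists q q', consec_primes q q' /\ q <= x < q'.
Proof.
move=> x1; have ex_q : exists k, prime k && (k <= x) by exists 2; rewrite x1.
have ub_q : forall k, prime k && (k <= x) -> k <= x by move=> k /andP[].
have [q /andP[pq qx] qmax] := ex_maxnP ex_q ub_q.
have [p qp pp] := prime_above q.
have ex_q' : exists k, prime k && (q < k) by exists p; rewrite pp.
have [q' /andP[pq' qq'] q'min] := ex_minnP ex_q'.
exists q, q'; split.
  apply/consec_primesP; split => // k /andP[qk kq']; apply/negP => pk.
  by have := q'min k; rewrite pk qk => /(_ isT); lia.
rewrite qx ltnNge; apply/negP => q'x.
by have := qmax q'; rewrite pq' q'x => /(_ isT); lia.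
Qed.

Lemma consec_primes_around_sq x : 4 < x ->
  exists a b, consec_primes a b /\ a ^ 2 < x <= b ^ 2.
Proof.
move=> x4; have ex_s : exists k, k ^ 2 < x by exists 2.
have ub_s : forall k, k ^ 2 < x -> k <= x.
  by move=> k kx; apply: leq_trans (ltnW kx); rewrite expnS expn1; nia.
have [s sx smax] := ex_maxnP ex_s ub_s.
have [a [b [ab /andP[a_s s_b]]]] := consec_primes_around (smax 2 x4).
exists a, b; split => //; apply/andP; split.
  by apply: leq_ltn_trans sx; rewrite leq_exp2r.
by rewrite leqNgt; apply/negP => /smax; lia.
Qed.

Lemma count_prime_consec a b : consec_primes a b ->
  count prime (iota 0 b) = (count prime (iota 0 a)).+1.
Proof.
case/and4P => pa _ ab gap; have -> : b = a + (b - a.+1).+1 by lia.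
move: gap; rewrite has_count -leqNgt leqn0 => /eqP gap.
by rewrite iotaD count_cat /= pa gap addn1.
Qed.

Lemma consec_primes_gap_le_d_sq q q' b : consec_primes q q' -> b <= q -> q' <= b ^ 2 ->
  q' - q <= d_sq b.
Proof.
move=> qq' bq q'b; have [_ _ lt_qq' _] := consec_primesP _ _ qq'.
have q_lt : q < (b ^ 2).+1 by lia.
have q'_lt : q' < (b ^ 2).+1 by lia.
apply: leq_trans (leq_bigmax (Ordinal q_lt)).
by apply: (@leq_bigmax_cond _ _ _ (Ordinal q'_lt)); rewrite /= bq qq'.
Qed.

Lemma prime_sqF n : prime (n ^ 2) = false.
Proof.
apply/negP => /primeP[n2 dvd_n2]; move: n2 (dvd_n2 n).
by rewrite expnS expn1 dvdn_mulr // => n2 /(_ isT) /orP[] /eqP; nia.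
Qed.

Theorem mainTheorem3 :
  (forall r pr pr1 : nat, 1 <= r -> kth_prime r pr -> kth_prime r.+1 pr1 ->
     d_sq pr1 <= 2 * pr) ->
  forall n : nat, 1 <= n ->
    exists q : nat, [/\ prime q, n ^ 2 < q & q < n.+1 ^ 2].
Proof.
move=> gap_bound n n1; have [n_le1 | n2] := leqP n 1.
  have -> : n = 1 by lia.
  by exists 2.
have sq k : k ^ 2 = k * k by rewrite expnS expn1.
have n_sq_gt1 : 1 < n ^ 2 by rewrite sq; nia.
have [q [q' [qq' /andP[qn nq']]]] := consec_primes_around n_sq_gt1.
have [pq pq' _ _] := consec_primesP _ _ qq'.
have q_lt_sq : q < n ^ 2.
  by rewrite ltn_neqAle qn andbT; apply: contraTneq pq => ->; rewrite prime_sqF.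
have q'_gt4 : 4 < q' by move: nq'; rewrite sq; nia.
have [a [b [ab /andP[aq' q'b]]]] := consec_primes_around_sq q'_gt4.
have [pa pb _ _] := consec_primesP _ _ ab.
have bq : b <= q.
  apply: consec_primes_leq ab pq _; rewrite -(ltn_exp2r _ _ (isT : 0 < 2)).
  exact: leq_trans aq' (consec_primes_le_sq qq').
have gap_le_2a : d_sq b <= 2 * a.
  by apply: (gap_bound (count prime (iota 0 a)).+1) => //; split => //; apply: count_prime_consec.
have := consec_primes_gap_le_d_sq qq' bq q'b.
by exists q'; split => //; move: aq' q_lt_sq nq'; rewrite !sq; nia.
Qed.
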